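(* For every $m\ge1$, the unipotent conjugacy classes of type $(3)$ in $\mathbf{PSL}_3(2^{2m})$ are of type D.
   Context: Type $(3)$ means a single Jordan block of size 3 (regular unipotent). Conjugacy classes are racks with $x\triangleright y=xyx^{-1}$. A subrack $Y$ is decomposable if $Y=R\sqcup S$ with nonempty subracks $R,S$, $Y\triangleright R=R$, $Y\triangleright S=S$. Type D: a decomposable subrack $R\sqcup S$ with $r\in R,s\in S$ and $r\triangleright(s\triangleright(r\triangleright s))\neq s$. *)

From HB Require Import structures.
From mathcomp Require Import all_boot all_order all_algebra all_fingroup all_solvable all_field.
Set Implicit Arguments. Unset Strict Implicit. Unset Printing Implicit Defensive.
Import GRing.Theory.

Local Open Scope group_scope.

Section Racks.
Variable gT : finGroupType.
Implicit Types (x y : gT) (Y R S : {set gT}).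

Definition rop x y : gT := x * y * x^-1.

Definition is_subrack Y : bool :=
  [forall x in Y, forall y in Y, rop x y \in Y].

Definition rack_act Y R : {set gT} := [set rop y r | y in Y, r in R].

Definition decomposition_of Y R S : Prop :=
  [/\ R != set0, S != set0, [disjoint R & S] & Y = R :|: S] /\
  [/\ is_subrack R, is_subrack S, rack_act Y R = R & rack_act Y S = S].

Definition type_D (O : {set gT}) : Prop :=
  exists (R S : {set gT}),
    [/\ (R :|: S) \subset O, is_subrack (R :|: S),
        decomposition_of (R :|: S) R S &
        exists r, exists s, [/\ r \in R, s \in S & rop r (rop s (rop r s)) != s]].
End Racks.

Section SL3.
Variable F : finFieldType.

Definition SL3 : {set {'GL_3[F]}} := [set g | (\det (GLval g) == 1)%R].

Lemma SL3_group_set : group_set SL3.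
Proof.
apply/group_setP; split; first by rewrite inE GL_1E det1.
move=> x y; rewrite !inE GL_ME => /eqP hx /eqP hy.
by rewrite -mulmxE det_mulmx hx hy mulr1.
Qed.

Canonical SL3_group := Group SL3_group_set.

Definition PSL3 := (SL3 / 'Z(SL3))%g.

(** u is unipotent with a single Jordan block of size 3:
    (u - 1)^3 = 0 and (u - 1)^2 <> 0. *)
Definition regular_unipotent (u : {'GL_3[F]}) : bool :=
  (((GLval u : 'M[F]_3) - 1) ^+ 3 == 0)%R && (((GLval u : 'M[F]_3) - 1) ^+ 2 != 0)%R.
End SL3.

(* Let u in SL_3(F), |F| = 4^m, be regular unipotent.  The field F has
   characteristic 2 and, since 3 divides 4^m - 1, contains a root w of
   X^2 + X + 1, hence a copy of GF(4) = F_2(w).  Up to conjugation by some P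
   in GL_3(F), u is the Jordan block J, whose entries lie in GF(4).  It then
   suffices to exhibit, inside the image of SL_3(4), an element s conjugate
   to r = [J] and a set T containing r but not s and normalised by r and s:
   the classes of r and s under H = <r, s> are then disjoint and form a
   decomposable subrack of the class of r, and r|>(s|>(r|>s)) <> s is
   checked directly. *)

From HB Require Import structures.
From mathcomp Require Import all_boot all_order all_algebra all_fingroup all_solvable all_field.
From mathcomp Require Import ring.

Set Implicit Arguments. Unset Strict Implicit. Unset Printing Implicit Defensive.
Import GRing.Theory FinRing.Theory.

Section RacksInGroups.
Variable gT : finGroupType.
Implicit Types (x y c : gT) (G H : {group gT}).
Local Open Scope group_scope.

Lemma rop_conj x y : rop x y = y ^ x^-1.
Proof. by rewrite /rop /conjg invgK mulgA. Qed.

Lemma class_rop H c x y : x \in H -> y \in c ^: H -> rop x y \in c ^: H.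
Proof.
move=> xH /imsetP[h hH ->]; rewrite rop_conj -conjgM.
by rewrite memJ_class // groupM ?groupV.
Qed.

Lemma class_subrack H c : c \in H -> is_subrack (c ^: H).
Proof.
move=> cH; apply/forall_inP => x xC; apply/forall_inP => y yC.
by apply: class_rop yC; apply: subsetP xC; apply: class_subG.
Qed.

Lemma rack_act_class H c (Y : {set gT}) :
  c ^: H \subset Y -> Y \subset H -> rack_act Y (c ^: H) = c ^: H.
Proof.
move=> sCY sYH; apply/eqP; rewrite eqEsubset; apply/andP; split.
  apply/subsetP => _ /imset2P[y x yY xC ->].
  by apply: class_rop xC; apply: (subsetP sYH).
apply/subsetP => x xC; apply/imset2P; exists x x; first exact: (subsetP sCY).
  exact: xC.
by rewrite /rop mulgK.
Qed.

Lemma type_D_of_separating_set G r s (T : {set gT}) :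
  r \in G -> s \in r ^: G -> r \in T -> s \notin T ->
  r \in 'N(T) -> s \in 'N(T) -> rop r (rop s (rop r s)) != s ->
  type_D (r ^: G).
Proof.
move=> rG sC rT sT rN sN rs.
have sG : s \in G by apply: subsetP sC; apply: class_subG.
pose H := <<[set r; s]>>%G.
have rH : r \in H by rewrite mem_gen // !inE eqxx.
have sH : s \in H by rewrite mem_gen // !inE eqxx orbT.
have sHG : H \subset G by rewrite gen_subG subUset !sub1set rG sG.
have sYH : r ^: H :|: s ^: H \subset H by rewrite subUset !class_subG.
have sRT : r ^: H \subset T.
  by rewrite class_sub_norm ?sub1set // gen_subG subUset !sub1set rN sN.
have classG c : c \in r ^: G -> c ^: H \subset r ^: G.
  move=> cC; apply/subsetP => _ /imsetP[h hH ->].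
  by rewrite -(class_eqP cC) memJ_class // (subsetP sHG).
exists (r ^: H), (s ^: H); split.
- by rewrite subUset !classG // class_refl.
- apply/forall_inP => x xY; apply/forall_inP => y yY.
  have xH := subsetP sYH x xY.
  by case/setUP: yY => yC; apply/setUP; [left|right]; apply: class_rop.
- split; split.
  + by apply/set0Pn; exists r; apply: class_refl.
  + by apply/set0Pn; exists s; apply: class_refl.
  + rewrite -setI_eq0; apply/set0Pn => -[_ /setIP[/imsetP[h1 h1H ->]]].
    case/imsetP => h2 h2H e12; have : s \in r ^: H.
      by rewrite -(conjgK h2 s) -e12 -conjgM memJ_class // groupM ?groupV.
    by move/(subsetP sRT); apply/negP.
  + by [].
  + exact: class_subrack.
  + exact: class_subrack.
  + by apply: rack_act_class; rewrite ?subsetUl.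
  + by apply: rack_act_class; rewrite ?subsetUr.
- by exists r, s; rewrite !class_refl.
Qed.
End RacksInGroups.

Local Open Scope ring_scope.

Lemma sum_ord3 (V : zmodType) (f : 'I_3 -> V) :
  \sum_(k < 3) f k = f (inord 0) + f (inord 1) + f (inord 2).
Proof.
rewrite !big_ord_recr big_ord0 /= add0r.
by congr (f _ + f _ + f _); apply: val_inj; rewrite /= inordK.
Qed.

Section FiniteFields.
Variable F : finFieldType.

Lemma char2_of_card k : #|F| = (2 ^ k)%N -> 1 + 1 = 0 :> F.
Proof.
move=> cF; have := card_finPcharP cF (isT : prime 2) => /pcharf0.
by rewrite -[2%N]/(1 + 1)%N natrD.
Qed.

(* If 3 divides |F^*|, then F contains a primitive cube root of unity,
   i.e. a root of X^2 + X + 1 (Cauchy's theorem in the unit group). *)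
Lemma cube_root_of_unity : (3 %| #|F|.-1)%N -> exists w : F, w * w + w + 1 = 0.
Proof.
rewrite -card_finField_unit => d3.
have [x _ ox] := Cauchy (isT : prime 3) d3.
have x3 : val x ^+ 3 = 1 by rewrite -val_unitX -ox expg_order.
have x1 : val x != 1.
  apply/eqP => x1; suff x_1 : x = 1%g by rewrite x_1 order1 in ox.
  exact: val_inj.
exists (val x); apply/eqP; move: x1; apply: contraNT => nz.
have : (val x - 1) * (val x * val x + val x + 1) = 0.
  have -> : (val x - 1) * (val x * val x + val x + 1) = val x ^+ 3 - 1 by ring.
  by rewrite x3 subrr.
by move/eqP; rewrite mulf_eq0 (negbTE nz) orbF subr_eq0.
Qed.
End FiniteFields.

Lemma three_dvd_pow4_pred m : (3 %| (2 ^ (2 * m)).-1)%N.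
Proof.
rewrite -subn1 -eqn_mod_dvd ?expn_gt0 // expnM.
by rewrite -modnXm /= exp1n.
Qed.

Section Transvections.
Variable R : comNzRingType.

(* Elementary transvections 1 + E_ij (i <> j) have determinant 1: they are
   triangular with unit diagonal, lower for j < i and upper otherwise. *)
Lemma det_transvection n (i j : 'I_n) : i != j -> \det (1 + delta_mx i j : 'M[R]_n) = 1.
Proof.
have lower (k l : 'I_n) : (l < k)%N -> \det (1 + delta_mx k l : 'M[R]_n) = 1.
  move=> lk; rewrite det_trig.
    apply: big1 => a _; rewrite !mxE eqxx /=.
    case: eqP => [->|]; last by rewrite addr0.
    have /negbTE-> : k != l by apply: contraTneq lk => ->; rewrite ltnn.
    by rewrite andbF addr0.
  apply/is_trig_mxP => a b ab; rewrite !mxE.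
  have /negbTE-> : a != b by apply: contraTneq ab => ->; rewrite ltnn.
  case: eqP => [ak|_]; last by rewrite addr0.
  case: eqP => [bl|_]; last by rewrite addr0.
  by move: lk; rewrite -ak -bl ltnNge (ltnW ab).
move=> ij; case: (ltngtP i j) => [ij'|ji|eij]; last by rewrite (val_inj eij) eqxx in ij.
  by rewrite -det_tr linearD /= trmx1 trmx_delta lower.
exact: lower.
Qed.

Lemma mulmx_delta_r m n (A : 'M[R]_(m, n)) i j k l :
  (A *m (delta_mx i j : 'M[R]_n)) k l = if l == j then A k i else 0.
Proof.
rewrite mxE (bigD1 i) //= mxE eqxx /= big1 ?addr0.
  by case: eqP; rewrite ?mulr1 ?mulr0.
by move=> p /negbTE; rewrite mxE => ->; rewrite mulr0.
Qed.

Lemma mulmx_delta_l m n (A : 'M[R]_(m, n)) i j k l :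
  ((delta_mx i j : 'M[R]_m) *m A) k l = if k == i then A j l else 0.
Proof.
rewrite mxE (bigD1 j) //= mxE eqxx andbT big1 ?addr0.
  by case: eqP; rewrite ?mul1r ?mul0r.
by move=> p /negbTE; rewrite mxE => ->; rewrite andbF mul0r.
Qed.

Lemma scalar_of_comm_delta n (A : 'M[R]_n.+2) :
  (forall i j : 'I_n.+2, i != j -> A *m delta_mx i j = delta_mx i j *m A) ->
  A = (A ord0 ord0)%:M.
Proof.
move=> cA.
have key i j k l : i != j -> (if l == j then A k i else 0) = (if k == i then A j l else 0).
  by move=> ij; rewrite -mulmx_delta_r -mulmx_delta_l cA.
have off k i : k != i -> A k i = 0.
  move=> ki; have := key i (lift i ord0) k (lift i ord0) (neq_lift _ _).
  by rewrite eqxx (negbTE ki).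
have diag i j : i != j -> A i i = A j j by move=> ij; have := key i j i j ij; rewrite !eqxx.
apply/matrixP => k l; rewrite mxE.
case: (eqVneq k l) => [<-|kl]; last by rewrite mulr0n off.
by case: (eqVneq k ord0) => [->//|k0]; rewrite (diag ord0 k) // eq_sym.
Qed.
End Transvections.

Section CenterSL3.
Variable F : finFieldType.
Local Notation G := {'GL_3[F]}.

Lemma GLval_inj : injective (@GLval 3 F).
Proof. exact: val_inj. Qed.

Definition toGL (M : 'M[F]_3) : G := insubd (1%g : G) M.

Lemma toGLK M : M \in unitmx -> GLval (toGL M) = M.
Proof. by move=> uM; rewrite /toGL insubdK. Qed.

(* The center of SL_3(F) consists of scalar matrices, since its elements
   commute with the transvections 1 + E_ij. *)
Lemma center_SL3_scalar (z : G) : z \in ('Z(SL3 F))%g -> GLval z = (GLval z ord0 ord0)%:M.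
Proof.
case/setIP => _ /centP cz; apply: scalar_of_comm_delta => i j ij.
have uT : (1 + delta_mx i j : 'M[F]_3) \in unitmx by rewrite unitmxE det_transvection ?unitr1.
have : toGL (1 + delta_mx i j) \in SL3 F by rewrite inE toGLK // det_transvection.
move/cz/(congr1 (@GLval 3 F)); rewrite !GL_MxE toGLK //.
by rewrite mulmxDr mulmxDl mulmx1 mul1mx => /addrI ->.
Qed.
End CenterSL3.

Section JordanForm.
Variable F : fieldType.

Definition jordan3 : 'M[F]_3 :=
  \matrix_(k, l) ((((l : nat) == k) || ((l : nat) == k.+1))%:R).

Variable N : 'M[F]_3.
Hypothesis N3 : N ^+ 3 = 0.
Variable v : 'rV[F]_3.
Hypothesis vN2 : v *m N ^+ 2 != 0.

Definition cyclic_basis : 'M[F]_3 := \matrix_(k < 3) (v *m N ^+ k).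

Lemma cyclic_vecM k j : v *m N ^+ k *m N ^+ j = v *m N ^+ (k + j).
Proof. by rewrite -mulmxA mulmxE -exprD. Qed.

Lemma cyclic_vec_ge3 k : (3 <= k)%N -> v *m N ^+ k = 0.
Proof. by move=> k3; rewrite -(subnKC k3) exprD N3 mul0r mulmx0. Qed.

(* If vN^2 <> 0 and N^3 = 0, then v, vN, vN^2 are linearly independent:
   multiplying a vanishing combination by N^2, then N, isolates each
   coefficient in turn. *)
Lemma cyclic_basis_unit : cyclic_basis \in unitmx.
Proof.
rewrite -row_free_unit; apply: inj_row_free => x hx.
have E : x 0 (inord 0) *: (v *m N ^+ 0) + x 0 (inord 1) *: (v *m N ^+ 1)
         + x 0 (inord 2) *: (v *m N ^+ 2) = 0.
  by rewrite -hx [x *m _]mulmx_sum_row sum_ord3 !rowK !inordK.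
have coef0 (c : F) : c *: (v *m N ^+ 2) = 0 -> c = 0.
  by move/eqP; rewrite scaler_eq0 (negbTE vN2) orbF => /eqP.
have c0 : x 0 (inord 0) = 0.
  apply: coef0; move/(congr1 (mulmx^~ (N ^+ 2))): E.
  rewrite mul0mx !mulmxDl -!scalemxAl !cyclic_vecM add0n.
  by rewrite (@cyclic_vec_ge3 (1 + 2)%N) ?(@cyclic_vec_ge3 (2 + 2)%N) // !scaler0 !addr0.
have c1 : x 0 (inord 1) = 0.
  apply: coef0; move/(congr1 (mulmx^~ (N ^+ 1))): E.
  rewrite c0 scale0r add0r mul0mx !mulmxDl -!scalemxAl !cyclic_vecM.
  by rewrite (@cyclic_vec_ge3 (2 + 1)%N) // scaler0 addr0.
have c2 : x 0 (inord 2) = 0 by apply: coef0; rewrite -E c0 c1 !scale0r !add0r.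
apply/rowP => k; rewrite mxE -(inord_val k).
by case: k => [[|[|[|k]]] Hk].
Qed.

Lemma cyclic_basis_conj : cyclic_basis *m (1 + N) = jordan3 *m cyclic_basis.
Proof.
apply/row_matrixP => k; rewrite !row_mul [row k _]rowK mulmxDr mulmx1.
rewrite -[_ *m N]/(_ *m N ^+ 1) cyclic_vecM [row k jordan3 *m _]mulmx_sum_row.
rewrite sum_ord3 !rowK !inordK // !mxE -(inord_val k).
case: k => [[|[|[|k]]] Hk] //=; rewrite !inordK //= ?scale1r ?scale0r ?add0r ?addr0 //.
by rewrite (@cyclic_vec_ge3 (2 + 1)%N) ?addr0.
Qed.
End JordanForm.

Lemma regular_unipotent_similar (F : fieldType) (u : 'M[F]_3) :
  (u - 1) ^+ 3 = 0 -> (u - 1) ^+ 2 != 0 ->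
  exists2 P, P \in unitmx & P *m u = jordan3 F *m P.
Proof.
set N := u - 1 => N3 N2.
have [i vN2] : exists i, row i (N ^+ 2) != 0.
  apply/existsP; apply: contraNT N2; rewrite negb_exists => /forallP rows0.
  by apply/eqP/row_matrixP => k; rewrite row0; apply/eqP/negbNE/rows0.
rewrite rowE in vN2.
exists (cyclic_basis N (delta_mx 0 i)); first exact: cyclic_basis_unit.
have -> : u = 1 + N by rewrite addrC subrK.
exact: cyclic_basis_conj.
Qed.

(* A computable model of GF(4) = F_2[w]/(w^2 + w + 1): the pair (a, b)
   stands for a + b w. *)
Definition gf4 := (bool * bool)%type.
Definition g0 : gf4 := (false, false).
Definition g1 : gf4 := (true, false).
Definition gw : gf4 := (false, true).
Definition gw2 : gf4 := (true, true).

Definition gf4_add (x y : gf4) : gf4 := (x.1 (+) y.1, x.2 (+) y.2).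
(* (a + bw)(c + dw) = (ac + bd) + (ad + bc + bd) w, using w^2 = 1 + w. *)
Definition gf4_mul (x y : gf4) : gf4 :=
  ((x.1 && y.1) (+) (x.2 && y.2), (x.1 && y.2) (+) (x.2 && y.1) (+) (x.2 && y.2)).

Definition mx4 := seq (seq gf4).
Definition get (A : mx4) (i j : nat) : gf4 := nth g0 (nth [::] A i) j.

Definition mul4 (A B : mx4) : mx4 :=
  mkseq (fun i => mkseq (fun j =>
    gf4_add (gf4_add (gf4_mul (get A i 0) (get B 0 j)) (gf4_mul (get A i 1) (get B 1 j)))
            (gf4_mul (get A i 2) (get B 2 j))) 3) 3.

Definition id4 : mx4 :=
  [:: [:: g1; g0; g0]; [:: g0; g1; g0]; [:: g0; g0; g1]].

(* A^3, which is the inverse of A whenever A^4 = 1. *)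
Definition cube4 (A : mx4) : mx4 := mul4 A (mul4 A A).

Definition idx3 : seq (nat * nat) := [seq (i, j) | i <- iota 0 3, j <- iota 0 3].

(* Some 2x2 minor A_q B_p - A_p B_q is nonzero, i.e. A is not a multiple
   of B. *)
Definition not_proportional (A B : mx4) : bool :=
  has (fun p => has (fun q =>
     gf4_mul (get A q.1 q.2) (get B p.1 p.2) != gf4_mul (get A p.1 p.2) (get B q.1 q.2))
     idx3) idx3.

Lemma idx3_lt p : p \in idx3 -> (p.1 < 3)%N && (p.2 < 3)%N.
Proof. by case/allpairsP => -[i j] [+ + ->]; rewrite !mem_iota => /= -> ->. Qed.

Lemma get_mul4 A B i j : (i < 3)%N -> (j < 3)%N ->
  get (mul4 A B) i j =
  gf4_add (gf4_add (gf4_mul (get A i 0) (get B 0 j)) (gf4_mul (get A i 1) (get B 1 j)))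
          (gf4_mul (get A i 2) (get B 2 j)).
Proof. by move=> i3 j3; rewrite /get nth_mkseq // nth_mkseq. Qed.

(* Explicit witnesses over GF(4).  jordan4 is the Jordan block and
   conj4 = g^-1 jordan4 g with g = conjg4 of determinant 1 (its inverse is
   conjg4_inv).  orbit4 is a set of 9 matrices containing jordan4, stable
   under conjugation by jordan4 and by conj4, none of which is proportional
   to conj4; its image in PSL_3 is the separating set T. *)
Definition jordan4 : mx4 := [:: [:: g1; g1; g0]; [:: g0; g1; g1]; [:: g0; g0; g1]].
Definition conj4 : mx4 := [:: [:: g1; gw2; g0]; [:: g1; gw2; gw2]; [:: gw2; g0; gw2]].
Definition conjg4 : mx4 := [:: [:: g1; g0; g0]; [:: g0; gw2; g0]; [:: gw2; g1; gw]].
Definition conjg4_inv : mx4 := [:: [:: g1; g0; g0]; [:: g0; gw; g0]; [:: gw; g1; gw2]].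
Definition orbit4 : seq mx4 :=
 [:: [:: [:: g0; g0; gw]; [:: g1; gw2; gw]; [:: gw; gw; gw]];
     [:: [:: g1; g0; g0]; [:: gw2; gw; gw]; [:: gw2; g1; gw]];
     [:: [:: g1; g1; g0]; [:: g0; g1; g1]; [:: g0; g0; g1]];
     [:: [:: g1; gw; gw]; [:: gw2; gw; gw]; [:: gw; g0; gw]];
     [:: [:: g1; gw; gw2]; [:: g0; gw2; gw2]; [:: gw2; gw; gw2]];
     [:: [:: gw; g0; gw]; [:: g0; gw2; gw2]; [:: gw2; gw; g0]];
     [:: [:: gw; g1; g0]; [:: gw2; gw; g1]; [:: gw2; g1; g1]];
     [:: [:: gw; gw; gw]; [:: g1; gw2; gw2]; [:: gw; gw; g0]];
     [:: [:: gw2; gw; gw2]; [:: gw2; gw; g1]; [:: gw; g0; g0]] ].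

Definition order4 (A : mx4) : bool := mul4 A (cube4 A) == id4.

Lemma order4_inv A : order4 A -> mul4 A (cube4 A) = id4.
Proof. by move/eqP. Qed.

Definition conj4_by (A Y : mx4) : mx4 := mul4 (mul4 (cube4 Y) A) Y.

Definition stabilises_orbit4 (Y : mx4) : bool :=
  all (fun A => conj4_by A Y \in orbit4) orbit4.

(* r |> (s |> (r |> s)) for r = jordan4 and s = conj4. *)
Definition braid4 : mx4 :=
  mul4 (mul4 jordan4 (mul4 (mul4 conj4 (mul4 (mul4 jordan4 conj4) (cube4 jordan4)))
                           (cube4 conj4)))
       (cube4 jordan4).

Lemma orbit4_order4 : all order4 orbit4. Proof. by vm_compute. Qed.
Lemma jordan4_order4 : order4 jordan4. Proof. by vm_compute. Qed.
Lemma conj4_order4 : order4 conj4. Proof. by vm_compute. Qed.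
Lemma conjg4K : mul4 conjg4 conjg4_inv = id4. Proof. by vm_compute. Qed.
Lemma conj4E : mul4 (mul4 conjg4_inv jordan4) conjg4 = conj4. Proof. by vm_compute. Qed.
Lemma jordan4_orbit4 : jordan4 \in orbit4. Proof. by vm_compute. Qed.
Lemma jordan4_stabilises : stabilises_orbit4 jordan4. Proof. by vm_compute. Qed.
Lemma conj4_stabilises : stabilises_orbit4 conj4. Proof. by vm_compute. Qed.
Lemma conj4_not_in_orbit4 : all (not_proportional conj4) orbit4. Proof. by vm_compute. Qed.
Lemma braid4_order4 : order4 braid4. Proof. by vm_compute. Qed.
Lemma braid4_neq : not_proportional braid4 conj4. Proof. by vm_compute. Qed.

Section Embedding.
Variables (F : fieldType) (w : F).
Hypothesis char2 : 1 + 1 = 0 :> F.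
Hypothesis w_root : w * w + w + 1 = 0.

Definition gf4_val (x : gf4) : F := x.1%:R + x.2%:R * w.

Lemma natr_addb (a b : bool) : (a (+) b)%:R = a%:R + b%:R :> F.
Proof. by case: a; case: b; rewrite /= ?addr0 ?add0r. Qed.

Lemma natr_andb (a b : bool) : (a && b)%:R = a%:R * b%:R :> F.
Proof. by case: a; case: b; rewrite /= ?mulr0 ?mul0r ?mulr1. Qed.

Lemma gf4_valD x y : gf4_val (gf4_add x y) = gf4_val x + gf4_val y.
Proof. by rewrite /gf4_val /= !natr_addb; ring. Qed.

Lemma addxx_char2 (x : F) : x + x = 0.
Proof. by rewrite -[x]mul1r -mulrDl char2 mul0r. Qed.

Lemma opp_char2 (x : F) : - x = x.
Proof. by apply/esym/eqP; rewrite -addr_eq0 addxx_char2. Qed.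

Lemma w_sqr : w * w = 1 + w.
Proof. by apply/eqP; rewrite -[1 + w]opp_char2 -addr_eq0 (addrC 1) addrA w_root. Qed.

Lemma gf4_val_g0 : gf4_val g0 = 0. Proof. by rewrite /gf4_val mul0r addr0. Qed.
Lemma gf4_val_g1 : gf4_val g1 = 1. Proof. by rewrite /gf4_val mul0r addr0. Qed.
Lemma gf4_val_gw : gf4_val gw = w. Proof. by rewrite /gf4_val mul1r add0r. Qed.
Lemma gf4_val_gw2 : gf4_val gw2 = 1 + w. Proof. by rewrite /gf4_val mul1r. Qed.

Lemma gf4_valM x y : gf4_val (gf4_mul x y) = gf4_val x * gf4_val y.
Proof.
case: x => a b; case: y => c d; rewrite /gf4_val /= !natr_addb !natr_andb.
have -> : (a%:R + b%:R * w) * (c%:R + d%:R * w) =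
  a%:R * c%:R + (a%:R * d%:R + b%:R * c%:R) * w + b%:R * d%:R * (w * w) :> F by ring.
by rewrite w_sqr; ring.
Qed.

(* The model embeds: the only element mapped to 0 is 0, because
   w is neither 0 nor 1. *)
Lemma gf4_val_eq0 x : gf4_val x = 0 -> x = g0.
Proof.
have w_neq0 : w != 0.
  by apply: contra_eqN w_root => /eqP->; rewrite mulr0 !add0r oner_eq0.
have w_neq1 : w != 1.
  by apply: contra_eqN w_root => /eqP->; rewrite mulr1 char2 add0r oner_eq0.
case: x => -[] [] /eqP; rewrite /gf4_val /= ?mul1r ?mul0r ?addr0 ?add0r ?oner_eq0 //.
- by rewrite addrC addr_eq0 opp_char2 (negbTE w_neq1).
- by rewrite (negbTE w_neq0).
Qed.

Lemma gf4_val_inj : injective gf4_val.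
Proof.
move=> x y exy; have : gf4_val (gf4_add x y) = 0 by rewrite gf4_valD exy addxx_char2.
by move/gf4_val_eq0; case: x {exy} => -[] []; case: y => -[] [].
Qed.

Definition embed4 (A : mx4) : 'M[F]_3 := \matrix_(i, j) gf4_val (get A i j).

Lemma embed4_mul A B : embed4 A *m embed4 B = embed4 (mul4 A B).
Proof.
apply/matrixP => i j; rewrite !mxE sum_ord3 get_mul4 // !gf4_valD !gf4_valM.
by rewrite !mxE !inordK.
Qed.

Lemma embed4_id : embed4 id4 = 1.
Proof.
apply/matrixP => i j; rewrite !mxE.
by case: i => [[|[|[|i]]] Hi] //; case: j => [[|[|[|j]]] Hj]; rewrite /gf4_val /= ?mul0r ?addr0.
Qed.

Lemma embed4_not_proportional A B :
  not_proportional A B -> forall c : F, embed4 A != c *: embed4 B.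
Proof.
case/hasP => p /idx3_lt/andP[p1 p2] /hasP[q /idx3_lt/andP[q1 q2] minor] c.
apply: contra minor => /eqP eAB.
have entry a b : (a < 3)%N -> (b < 3)%N -> gf4_val (get A a b) = c * gf4_val (get B a b).
  move=> a3 b3; have := congr1 (fun M : 'M[F]_3 => M (Ordinal a3) (Ordinal b3)) eAB.
  by rewrite /= !mxE.
apply/eqP/gf4_val_inj; rewrite !gf4_valM !entry //.
by rewrite -!mulrA [X in c * X]mulrC.
Qed.

Lemma embed4_unit A B : mul4 A B = id4 -> embed4 A \in unitmx.
Proof.
move=> AB; suff : embed4 A *m embed4 B = 1%:M by case/mulmx1_unit.
by rewrite embed4_mul AB embed4_id.
Qed.

Lemma embed4_inv A B : mul4 A B = id4 -> invmx (embed4 A) = embed4 B.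
Proof.
move=> AB; have uA := embed4_unit AB.
by rewrite -[RHS]mul1mx -(mulVmx uA) -mulmxA embed4_mul AB embed4_id mulmx1.
Qed.

Lemma embed4_inv_unit A B : mul4 A B = id4 -> embed4 B \in unitmx.
Proof. by move=> AB; rewrite -(embed4_inv AB) unitmx_inv (embed4_unit AB). Qed.

Lemma embed4_mul_unit A B : embed4 A \in unitmx -> embed4 B \in unitmx ->
  embed4 (mul4 A B) \in unitmx.
Proof. by move=> uA uB; rewrite -embed4_mul unitmx_mul uA. Qed.

Lemma jordan3_embed4 : jordan3 F = embed4 jordan4.
Proof.
apply/matrixP => i j; rewrite !mxE.
by case: i => [[|[|[|i]]] Hi] //; case: j => [[|[|[|j]]] Hj]; rewrite /gf4_val /= ?mul0r ?addr0.
Qed.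

(* det conjg4 = 1 * w^2 * w = 1, the matrix being lower triangular. *)
Lemma det_conjg4 : \det (embed4 conjg4) = 1.
Proof.
rewrite det_trig; last first.
  apply/is_trig_mxP => i j; rewrite mxE.
  by case: i => [[|[|[|i]]] Hi] //; case: j => [[|[|[|j]]] Hj] //= _; rewrite gf4_val_g0.
rewrite !big_ord_recr big_ord0 !mxE /= mul1r.
change (gf4_val g1 * gf4_val gw2 * gf4_val gw = 1).
rewrite gf4_val_g1 gf4_val_gw gf4_val_gw2 mul1r.
by rewrite mulrDl mul1r w_sqr addrCA addxx_char2 addr0.
Qed.
End Embedding.

Section ProjectiveImage.
Variables (F : finFieldType) (w : F).
Hypothesis char2 : 1 + 1 = 0 :> F.
Hypothesis w_root : w * w + w + 1 = 0.
Variable P : 'M[F]_3.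
Hypothesis P_unit : P \in unitmx.

Local Notation G := {'GL_3[F]}.
Local Notation Z := ('Z(SL3 F))%g.
Local Notation embed4 := (embed4 w).
Local Notation embed4_mul := (embed4_mul char2 w_root).
Local Notation embed4_unit := (embed4_unit char2 w_root).
Local Notation embed4_inv := (embed4_inv char2 w_root).
Local Notation embed4_inv_unit := (embed4_inv_unit char2 w_root).
Local Notation embed4_mul_unit := (embed4_mul_unit char2 w_root).
Local Open Scope group_scope.

Definition embedGL (A : mx4) : G := toGL (embed4 A).

Lemma embedGLM A B : embed4 A \in unitmx -> embed4 B \in unitmx ->
  embedGL (mul4 A B) = embedGL A * embedGL B.
Proof.
move=> uA uB; apply: GLval_inj.
by rewrite GL_MxE /embedGL !toGLK ?embed4_mul_unit // embed4_mul.
Qed.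

Lemma embedGLV A Ainv : mul4 A Ainv = id4 -> (embedGL A)^-1 = embedGL Ainv.
Proof.
move=> AK; apply: GLval_inj.
by rewrite GL_VxE /embedGL !toGLK ?(embed4_inv_unit AK) ?(embed4_unit AK) ?(embed4_inv AK).
Qed.

Lemma embedGL_conj A Y Yinv : embed4 A \in unitmx -> mul4 Y Yinv = id4 ->
  embedGL A ^ embedGL Y = embedGL (mul4 (mul4 Yinv A) Y).
Proof.
move=> uA YK; have uY := embed4_unit YK; have uYinv := embed4_inv_unit YK.
by rewrite /conjg (embedGLV YK) !embedGLM ?embed4_mul_unit // mulgA.
Qed.

Lemma embedGL_rop A B Ainv : mul4 A Ainv = id4 -> embed4 B \in unitmx ->
  rop (embedGL A) (embedGL B) = embedGL (mul4 (mul4 A B) Ainv).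
Proof.
move=> AK uB; have uA := embed4_unit AK; have uAinv := embed4_inv_unit AK.
by rewrite /rop (embedGLV AK) !embedGLM ?embed4_mul_unit // mulgA.
Qed.

(* Scalar matrices are central in GL_3(F), so every element of GL_3(F)
   normalises the center of SL_3(F). *)
Lemma conjg_scalar (z x : G) c : GLval z = c%:M -> z ^ x = z.
Proof.
move=> zc; apply: GLval_inj.
rewrite /conjg !GL_MxE GL_VxE zc -scalar_mxC mulmxA mulVmx ?mul1mx //.
exact: GL_unitmx.
Qed.

Lemma norm_center_SL3 (x : G) : x \in 'N(Z).
Proof.
rewrite inE; apply/subsetP => y; rewrite mem_conjg => yZ.
have /(conjg_scalar x) := center_SL3_scalar yZ.
by rewrite conjgKV => ->.
Qed.

(* The image in GL_3(F)/Z of the conjugate by P; it is a group morphism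
   since scalars are normalised by everything. *)
Definition proj (x : G) : coset_of Z := coset Z (x ^ toGL P).

Lemma projM x y : proj (x * y) = proj x * proj y.
Proof. by rewrite /proj conjMg morphM ?norm_center_SL3. Qed.

Lemma projV x : proj x^-1 = (proj x)^-1.
Proof. by rewrite /proj conjVg morphV ?norm_center_SL3. Qed.

Lemma projJ x y : proj (x ^ y) = proj x ^ proj y.
Proof. by rewrite /conjg !projM projV. Qed.

Lemma proj_rop x y : proj (rop x y) = rop (proj x) (proj y).
Proof. by rewrite /rop !projM projV. Qed.

Lemma proj_eq x y : proj x = proj y -> exists c, GLval x = (c *: GLval y)%R.
Proof.
move=> exy.
have : coset Z ((x * y^-1) ^ toGL P) = 1 by rewrite -/(proj _) projM projV exy mulgV.
move/coset_idr => /(_ (norm_center_SL3 _)) /center_SL3_scalar zc.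
have xy_scalar : (x * y^-1) ^ toGL P = x * y^-1.
  by rewrite -{2}(conjgK (toGL P) (x * y^-1)) (conjg_scalar _ zc).
exists (GLval ((x * y^-1) ^ toGL P) ord0 ord0).
by rewrite -mul_scalar_mx -zc xy_scalar -GL_MxE mulgKV.
Qed.

Lemma proj_embed_neq A B : embed4 A \in unitmx -> embed4 B \in unitmx ->
  not_proportional A B -> proj (embedGL A) != proj (embedGL B).
Proof.
move=> uA uB nAB; apply/eqP => /proj_eq[c].
rewrite /embedGL !toGLK //; apply/eqP.
exact: embed4_not_proportional.
Qed.

Definition orbit_set : {set coset_of Z} :=
  [set a in [seq proj (embedGL A) | A <- orbit4]].

Lemma orbit4_unit A : A \in orbit4 -> embed4 A \in unitmx.
Proof. by move/(allP orbit4_order4)/order4_inv/embed4_unit. Qed.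

Lemma stabilises_norm Y : order4 Y -> stabilises_orbit4 Y ->
  proj (embedGL Y) \in 'N(orbit_set).
Proof.
move=> /order4_inv YK /allP stabY; rewrite inE; apply/subsetP => _ /imsetP[a + ->].
rewrite inE => /mapP[A A_orb ->].
rewrite -projJ (embedGL_conj (orbit4_unit A_orb) YK) inE.
by apply/mapP; exists (conj4_by A Y); first exact: stabY.
Qed.

Lemma conj4_notin_orbit_set : proj (embedGL conj4) \notin orbit_set.
Proof.
have uS := embed4_unit (order4_inv conj4_order4).
rewrite inE; apply/mapP => -[A A_orb]; apply/eqP.
exact: proj_embed_neq uS (orbit4_unit A_orb) (allP conj4_not_in_orbit4 A A_orb).
Qed.

Lemma proj_conjg4_PSL3 : proj (embedGL conjg4) \in PSL3 F.
Proof.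
apply: mem_quotient; rewrite inE /conjg !GL_MxE GL_VxE /embedGL.
rewrite !toGLK ?(embed4_unit conjg4K) //.
rewrite !det_mulmx det_inv (det_conjg4 char2 w_root) mul1r mulVf //.
by rewrite -unitfE -unitmxE.
Qed.

Lemma coset_jordan4 (u : G) : (P *m GLval u = embed4 jordan4 *m P)%R ->
  coset Z u = proj (embedGL jordan4).
Proof.
move=> Pu; congr (coset Z _); apply: GLval_inj.
rewrite /conjg !GL_MxE GL_VxE /embedGL !toGLK ?(embed4_unit (order4_inv jordan4_order4)) //.
by rewrite -Pu mulmxA mulVmx // mul1mx.
Qed.

Lemma type_D_of_jordan4 (u : G) : u \in SL3 F ->
  (P *m GLval u = embed4 jordan4 *m P)%R -> type_D (coset Z u ^: PSL3 F).
Proof.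
move=> uSL /coset_jordan4 rE.
have JK := order4_inv jordan4_order4; have SK := order4_inv conj4_order4.
have sE : proj (embedGL conj4) = coset Z u ^ proj (embedGL conjg4).
  by rewrite rE -projJ (embedGL_conj (embed4_unit JK) conjg4K) conj4E.
apply: (type_D_of_separating_set (T := orbit_set) (s := proj (embedGL conj4))).
- exact: mem_quotient.
- by rewrite sE memJ_class // proj_conjg4_PSL3.
- by rewrite rE inE; apply/mapP; exists jordan4; first exact: jordan4_orbit4.
- exact: conj4_notin_orbit_set.
- by rewrite rE stabilises_norm // ?jordan4_order4 ?jordan4_stabilises.
- by rewrite stabilises_norm // ?conj4_order4 ?conj4_stabilises.
have uJ := embed4_unit JK; have uS := embed4_unit SK.
rewrite rE -!proj_rop (embedGL_rop JK uS) (embedGL_rop SK) ?embed4_mul_unit //.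
rewrite (embedGL_rop JK) ?embed4_mul_unit //.
exact: proj_embed_neq (embed4_unit (order4_inv braid4_order4)) uS braid4_neq.
Qed.
End ProjectiveImage.

Theorem mainTheorem15 (m : nat) (F : finFieldType) :
  (0 < m)%N -> #|F| = (2 ^ (2 * m))%N ->
  forall u : {'GL_3[F]}, u \in SL3 F -> regular_unipotent u ->
  type_D ((coset 'Z(SL3 F) u) ^: PSL3 F)%g.
Proof.
move=> _ cardF u uSL /andP[/eqP N3 N2].
have char2 := char2_of_card cardF.
have [w w_root] : exists w : F, w * w + w + 1 = 0.
  by apply: cube_root_of_unity; rewrite cardF three_dvd_pow4_pred.
have [P P_unit Pu] := regular_unipotent_similar N3 N2.
apply: (type_D_of_jordan4 char2 w_root P_unit uSL).
by rewrite Pu (jordan3_embed4 w).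
Qed.
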